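(* Let $k:[0,1]\times[0,1]\to\mathbb{R}$ be continuous and let $f$ be a real function of $(x,u,v,z)$. Define $$G_0(x,s)=\frac16\begin{cases} s(x-1)(x^2-x+s^2), & 0\le s\le x\le 1,\\ x(s-1)(s^2-s+x^2), & 0\le x\le s\le 1,\end{cases}\qquad G_1(x,s)=\frac16\begin{cases} s(3x^2-6x+s^2+2), & 0\le s\le x\le 1,\\ (s-1)(3x^2-2s+s^2), & 0\le x\le s\le 1,\end{cases}$$ $M_0=\max_{0\le x\le1}\int_0^1|G_0(x,s)|\,ds$, $M_1=\max_{0\le x\le 1}\int_0^1|G_1(x,s)|\,ds$, $M_2=\max_{0\le x\le1}\int_0^1|k(x,s)|\,ds$, and for $M>0$ $$\mathcal{D}_M^+=\{(x,u,v,z): 0\le x\le 1,\ 0\le u\le M_0M,\ |v|\le M_1M,\ |z|\le M_0M_2M\}.$$ Suppose there exist numbers $M>0$ and $L_0,L_1,L_2\ge 0$ such that: (i) $f$ is continuous on $\mathcal{D}_M^+$, $0\le f(x,u,v,z)\le M$ for all $(x,u,v,z)\in\mathcal{D}_M^+$, and the function $x\mapsto f(x,0,0,0)$ is not identically zero on $[0,1]$; (ii) $|f(x_2,u_2,v_2,z_2)-f(x_1,u_1,v_1,z_1)|\le L_0|u_2-u_1|+L_1|v_2-v_1|+L_2|z_2-z_1|$ for all $(x_i,u_i,v_i,z_i)\in\mathcal{D}_M^+$, $i=1,2$; (iii) $q:=L_0M_0+L_1M_1+L_2M_2<1$. Then the problem $$u^{(4)}(x)=f\Big(x,u(x),u'(x),\int_0^1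 k(x,t)u(t)\,dt\Big),\ 0<x<1,\qquad u(0)=u(1)=u''(0)=u''(1)=0$$ has a unique positive solution $u\in C^4[0,1]$ satisfying $0\le u(x)\le M_0M$ and $|u'(x)|\le M_1M$ for all $0\le x\le 1$.
   Context: $G_0$ is the Green function of $u''''=0$ with boundary conditions $u(0)=u''(0)=u(1)=u''(1)=0$, and $G_1=\partial G_0/\partial x$. The paper computes $M_0=5/384$ and $M_1=1/24$. *)

From Stdlib Require Import Reals.
From Coquelicot Require Import Coquelicot.
Open Scope R_scope.

(* Green function of u''''=0, u(0)=u''(0)=u(1)=u''(1)=0 *)
Definition G0 (x s : R) : R :=
  if Rle_dec s x then s * (1 - x) * (2 * x - x ^ 2 - s ^ 2) / 6
  else x * (1 - s) * (2 * s - s ^ 2 - x ^ 2) / 6.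

(* G1 = dG0/dx, exactly as in the paper *)
Definition G1 (x s : R) : R :=
  if Rle_dec s x then s * (3 * x ^ 2 - 6 * x + s ^ 2 + 2) / 6
  else (s - 1) * (3 * x ^ 2 - 2 * s + s ^ 2) / 6.

Definition max01 (F : R -> R) : R :=
  real (Lub_Rbar (fun y => exists x, 0 <= x <= 1 /\ y = F x)).

Definition M0 : R := max01 (fun x => RInt (fun s => Rabs (G0 x s)) 0 1).
Definition M1 : R := max01 (fun x => RInt (fun s => Rabs (G1 x s)) 0 1).
Definition M2 (k : R -> R -> R) : R :=
  max01 (fun x => RInt (fun s => Rabs (k x s)) 0 1).

Definition inD (k : R -> R -> R) (M x u v z : R) : Prop :=
  0 <= x <= 1 /\ 0 <= u <= M0 * M /\ Rabs v <= M1 * M /\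
  Rabs z <= M0 * M2 k * M.

Definition cont_square (k : R -> R -> R) : Prop :=
  forall x s, 0 <= x <= 1 -> 0 <= s <= 1 ->
  forall eps, 0 < eps -> exists delta, 0 < delta /\
    forall x' s', 0 <= x' <= 1 -> 0 <= s' <= 1 ->
      Rabs (x' - x) < delta -> Rabs (s' - s) < delta ->
      Rabs (k x' s' - k x s) < eps.

Definition cont_on_D (k : R -> R -> R) (M : R) (f : R -> R -> R -> R -> R) : Prop :=
  forall x u v z, inD k M x u v z ->
  forall eps, 0 < eps -> exists delta, 0 < delta /\
    forall x' u' v' z', inD k M x' u' v' z' ->
      Rabs (x' - x) < delta -> Rabs (u' - u) < delta ->
      Rabs (v' - v) < delta -> Rabs (z' - z) < delta ->
      Rabs (f x' u' v' z' - f x u v z) < eps.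

Definition deriv_on01 (g g' : R -> R) : Prop :=
  forall x, 0 <= x <= 1 ->
  forall eps, 0 < eps -> exists delta, 0 < delta /\
    forall y, 0 <= y <= 1 -> y <> x -> Rabs (y - x) < delta ->
      Rabs ((g y - g x) / (y - x) - g' x) < eps.

Definition cont_on01 (g : R -> R) : Prop :=
  forall x, 0 <= x <= 1 ->
  forall eps, 0 < eps -> exists delta, 0 < delta /\
    forall y, 0 <= y <= 1 -> Rabs (y - x) < delta -> Rabs (g y - g x) < eps.

Definition is_pos_sol (k : R -> R -> R) (f : R -> R -> R -> R -> R) (M : R)
  (u : R -> R) : Prop :=
  exists u1 u2 u3 u4 : R -> R,
    deriv_on01 u u1 /\ deriv_on01 u1 u2 /\ deriv_on01 u2 u3 /\
    deriv_on01 u3 u4 /\ cont_on01 u4 /\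
    (forall x, 0 < x < 1 ->
       u4 x = f x (u x) (u1 x) (RInt (fun t => k x t * u t) 0 1)) /\
    u 0 = 0 /\ u 1 = 0 /\ u2 0 = 0 /\ u2 1 = 0 /\
    (forall x, 0 < x < 1 -> 0 < u x) /\
    (forall x, 0 <= x <= 1 -> 0 <= u x <= M0 * M /\ Rabs (u1 x) <= M1 * M).

(* By the Green function representation, u solves the boundary value problem
   iff u = U phi, where U phi (x) = int_0^1 G0(x,s) phi(s) ds, (U phi)' is the
   same integral with G1, and phi = u'''' is a fixed point of
     T phi (x) = f (x, U phi (x), (U phi)'(x), int_0^1 k(x,t) U phi (t) dt).
   The constants M0, M1, M2 bound U, (U .)' and the integral term, so T maps the
   continuous functions with values in [0, M] into themselves, and condition
   (ii) makes T a contraction for the sup norm with constant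
   L0 M0 + L1 M1 + L2 M2 < 1 (using M0 <= 1).  The Picard iterates converge
   uniformly to the unique fixed point phi, and u = U phi is positive inside
   (0,1) because G0 > 0 on the open square and phi does not vanish identically
   (otherwise phi = f(., 0, 0, 0) would).  The derivatives of U phi are computed
   by writing the Green integrals through the moments int_0^x s^i phi(s) ds;
   uniqueness for the linear problem holds because u'''' = 0 with the four
   boundary conditions forces u = 0. *)

From Stdlib Require Import Reals Lra Psatz ClassicalEpsilon Classical.
From Coquelicot Require Import Coquelicot.
Open Scope R_scope.

Lemma continuity_pt_eps f x : continuity_pt f x <->
  forall eps, 0 < eps -> exists d, 0 < d /\
    forall y, Rabs (y - x) < d -> Rabs (f y - f x) < eps.
Proof.
  rewrite continuity_pt_locally. split.
  - intros H eps Heps. destruct (H (mkposreal eps Heps)) as [d Hd].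
    exists d. split; [apply cond_pos|]. intros y Hy. exact (Hd y Hy).
  - intros H eps. destruct (H eps (cond_pos eps)) as [d [Hd K]].
    exists (mkposreal d Hd). intros y Hy. exact (K y Hy).
Qed.

Lemma continuous_of_continuity f x : continuity f -> continuous f x.
Proof. intros H. apply continuity_pt_filterlim, H. Qed.

Lemma cont_on01_continuity g : continuity g -> cont_on01 g.
Proof.
  intros H x _ eps He. destruct (proj1 (continuity_pt_eps g x) (H x) eps He) as [d [Hd K]].
  exists d. split; auto.
Qed.

Lemma cont_on01_interior_approx g x : cont_on01 g -> 0 <= x <= 1 ->
  forall eps, 0 < eps -> exists y, 0 < y < 1 /\ Rabs (g y - g x) < eps.
Proof.
  intros Hg Hx eps He. destruct (Hg x Hx eps He) as [d [Hd K]].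
  set (t := Rmin d 1 / 2).
  assert (Ht : 0 < t < 1 /\ t < d).
  { unfold t. pose proof (Rmin_l d 1). pose proof (Rmin_r d 1).
    pose proof (Rmin_glb_lt d 1 0 Hd Rlt_0_1). lra. }
  (* a point strictly between [x] and [1/2] *)
  exists ((1 - t) * x + t / 2).
  assert (Hy : 0 < (1 - t) * x + t / 2 < 1) by nra.
  split; auto. apply K; [lra|].
  replace ((1 - t) * x + t / 2 - x) with (t * (/ 2 - x)) by field.
  rewrite Rabs_mult, Rabs_pos_eq by lra.
  apply Rle_lt_trans with (t * 1); [|lra].
  apply Rmult_le_compat_l; [lra|]. apply Rabs_le. lra.
Qed.

Lemma cont_on01_interior_bounds g a b : cont_on01 g ->
  (forall x, 0 < x < 1 -> a <= g x <= b) -> forall x, 0 <= x <= 1 -> a <= g x <= b.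
Proof.
  intros Hg Hab x Hx. split; apply Rnot_lt_le; intro Hlt.
  - destruct (cont_on01_interior_approx g x Hg Hx (a - g x)) as [y [Hy K]]; [lra|].
    apply Rabs_def2 in K. pose proof (Hab y Hy). lra.
  - destruct (cont_on01_interior_approx g x Hg Hx (g x - b)) as [y [Hy K]]; [lra|].
    apply Rabs_def2 in K. pose proof (Hab y Hy). lra.
Qed.

Definition clamp01 (x : R) : R := Rmax 0 (Rmin 1 x).

Lemma clamp01_in x : 0 <= clamp01 x <= 1.
Proof. unfold clamp01, Rmax, Rmin. repeat destruct Rle_dec; lra. Qed.

Lemma clamp01_id x : 0 <= x <= 1 -> clamp01 x = x.
Proof. intro. unfold clamp01, Rmax, Rmin. repeat destruct Rle_dec; lra. Qed.

Lemma clamp01_lipschitz x y : Rabs (clamp01 y - clamp01 x) <= Rabs (y - x).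
Proof.
  unfold clamp01, Rmax, Rmin.
  repeat destruct Rle_dec; unfold Rabs; repeat destruct Rcase_abs; lra.
Qed.

Lemma continuity_clamp01_comp g : cont_on01 g -> continuity (fun x => g (clamp01 x)).
Proof.
  intros Hg x. apply continuity_pt_eps. intros eps He.
  destruct (Hg (clamp01 x) (clamp01_in x) eps He) as [d [Hd K]].
  exists d. split; auto. intros y Hy. apply K; [apply clamp01_in|].
  eapply Rle_lt_trans; [apply clamp01_lipschitz | exact Hy].
Qed.

Lemma deriv_on01_is_derive g g' : (forall x, is_derive g x (g' x)) -> deriv_on01 g g'.
Proof.
  intros H x _ eps He.
  destruct (proj1 (is_derive_Reals g x (g' x)) (H x) eps He) as [d Hd].
  exists d. split; [apply cond_pos|]. intros y _ Hne Hyd.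
  specialize (Hd (y - x)). replace (x + (y - x)) with y in Hd by ring.
  apply Hd; auto. lra.
Qed.

Lemma deriv_on01_ext g g' h h' : deriv_on01 g g' ->
  (forall x, 0 <= x <= 1 -> g x = h x) -> (forall x, 0 <= x <= 1 -> g' x = h' x) ->
  deriv_on01 h h'.
Proof.
  intros H E E' x Hx eps He. destruct (H x Hx eps He) as [d [Hd K]].
  exists d. split; auto. intros y Hy Hne Hyd. rewrite <- !E, <- E' by auto. auto.
Qed.

Lemma deriv_on01_minus g g' h h' : deriv_on01 g g' -> deriv_on01 h h' ->
  deriv_on01 (fun x => g x - h x) (fun x => g' x - h' x).
Proof.
  intros Hg Hh x Hx eps He.
  destruct (Hg x Hx (eps / 2)) as [d1 [Hd1 K1]]; [lra|].
  destruct (Hh x Hx (eps / 2)) as [d2 [Hd2 K2]]; [lra|].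
  exists (Rmin d1 d2). split; [apply Rmin_pos; auto|].
  intros y Hy Hne Hyd.
  specialize (K1 y Hy Hne (Rlt_le_trans _ _ _ Hyd (Rmin_l _ _))).
  specialize (K2 y Hy Hne (Rlt_le_trans _ _ _ Hyd (Rmin_r _ _))).
  replace ((g y - h y - (g x - h x)) / (y - x) - (g' x - h' x)) with
    (((g y - g x) / (y - x) - g' x) - ((h y - h x) / (y - x) - h' x)) by (field; lra).
  eapply Rle_lt_trans; [apply Rabs_triang|]. rewrite Rabs_Ropp. lra.
Qed.

Lemma deriv_on01_cont g g' : deriv_on01 g g' -> cont_on01 g.
Proof.
  intros H x Hx eps He. destruct (H x Hx 1 Rlt_0_1) as [d [Hd K]].
  set (c := Rabs (g' x) + 1).
  assert (Hc : 0 < c) by (pose proof (Rabs_pos (g' x)); unfold c; lra).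
  exists (Rmin d (eps / c)). split; [apply Rmin_pos; auto; apply Rdiv_lt_0_compat; auto|].
  intros y Hy Hyd. destruct (Req_dec y x) as [->|Hne].
  { rewrite Rminus_eq_0, Rabs_R0; lra. }
  specialize (K y Hy Hne (Rlt_le_trans _ _ _ Hyd (Rmin_l _ _))).
  assert (Hq : Rabs ((g y - g x) / (y - x)) <= c).
  { replace ((g y - g x) / (y - x)) with (((g y - g x) / (y - x) - g' x) + g' x) by ring.
    eapply Rle_trans; [apply Rabs_triang|]. unfold c. lra. }
  replace (g y - g x) with ((g y - g x) / (y - x) * (y - x)) by (field; lra).
  rewrite Rabs_mult.
  apply Rle_lt_trans with (c * Rabs (y - x)).
  { apply Rmult_le_compat_r; auto. apply Rabs_pos. }
  replace eps with (c * (eps / c)) by (field; lra).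
  apply Rmult_lt_compat_l; auto. eapply Rlt_le_trans; [exact Hyd | apply Rmin_r].
Qed.

Lemma deriv_on01_zero_const g g' : deriv_on01 g g' ->
  (forall x, 0 <= x <= 1 -> g' x = 0) -> forall x, 0 <= x <= 1 -> g x = g 0.
Proof.
  intros H H0.
  (* [h] is [g] extended constantly outside [0,1], to which [null_derivative_loc] applies *)
  set (h := fun y => g (clamp01 y)).
  assert (Hl : forall x, 0 < x < 1 -> derivable_pt_lim h x (g' x)).
  { intros x Hx eps He. destruct (H x ltac:(lra) eps He) as [d [Hd K]].
    assert (Hp : 0 < Rmin d (Rmin x (1 - x))) by (repeat apply Rmin_pos; lra).
    exists (mkposreal _ Hp). intros e He0 Hed. simpl in Hed.
    pose proof (Rmin_l d (Rmin x (1 - x))). pose proof (Rmin_r d (Rmin x (1 - x))).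
    pose proof (Rmin_l x (1 - x)). pose proof (Rmin_r x (1 - x)).
    assert (Hin : 0 <= x + e <= 1) by (apply Rabs_lt_between in Hed; lra).
    unfold h. rewrite !clamp01_id by lra.
    specialize (K (x + e) Hin ltac:(lra)). replace (x + e - x) with e in K by ring.
    apply K; lra. }
  assert (pr : forall x, 0 < x < 1 -> derivable_pt h x)
    by (intros x Hx; exists (g' x); apply Hl, Hx).
  assert (C : forall x, 0 <= x <= 1 -> h x = h 0).
  { apply (null_derivative_loc h 0 1 pr).
    - intros x _. apply continuity_clamp01_comp. eapply deriv_on01_cont; eauto.
    - intros x Hx. unfold derive_pt. destruct (pr x Hx) as [l Hl2]. simpl.
      rewrite <- (H0 x) by lra. eapply uniqueness_limite; eauto. }
  intros x Hx. specialize (C x Hx). unfold h in C. rewrite !clamp01_id in C by lra. exact C.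
Qed.

Lemma deriv_on01_const_affine g g' a : deriv_on01 g g' ->
  (forall x, 0 <= x <= 1 -> g' x = a) -> forall x, 0 <= x <= 1 -> g x = g 0 + a * x.
Proof.
  intros H Ha x Hx.
  assert (Hl : deriv_on01 (fun y => a * y) (fun _ => a)).
  { apply deriv_on01_is_derive. intro y. auto_derive; auto; ring. }
  pose proof (deriv_on01_zero_const _ _ (deriv_on01_minus _ _ _ _ H Hl)) as C.
  cbv beta in C. specialize (C ltac:(intros y Hy; rewrite Ha; auto; ring) x Hx). lra.
Qed.

Lemma ex_RInt_continuity g a b : continuity g -> ex_RInt g a b.
Proof.
  intros H. apply (ex_RInt_continuous (V := R_CompleteNormedModule)).
  intros z _. apply continuous_of_continuity, H.
Qed.

Lemma ex_RInt_01_clamp g : continuity (fun t => g (clamp01 t)) -> ex_RInt g 0 1.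
Proof.
  intros H. apply (ex_RInt_ext (fun t => g (clamp01 t))); [|apply ex_RInt_continuity, H].
  intros t Ht. rewrite Rmin_left, Rmax_right in Ht by lra. rewrite clamp01_id by lra. reflexivity.
Qed.

(* Coquelicot states these for an abstract normed module; at type [R] the results
   are visible to [ring] and [lra]. *)
Lemma RInt_extR (g h : R -> R) a b :
  (forall x, Rmin a b < x < Rmax a b -> g x = h x) -> RInt g a b = RInt h a b.
Proof. intro H. now apply (RInt_ext (V := R_CompleteNormedModule)). Qed.

Lemma RInt_minusR (g h : R -> R) a b : ex_RInt g a b -> ex_RInt h a b ->
  RInt (fun x => g x - h x) a b = RInt g a b - RInt h a b.
Proof. intros. apply (RInt_minus g h a b); auto. Qed.

Lemma RInt_ChaslesR (g : R -> R) a b c : ex_RInt g a b -> ex_RInt g b c ->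
  RInt g a b + RInt g b c = RInt g a c.
Proof. intros. apply (RInt_Chasles g a b c); auto. Qed.

Lemma RInt_zero_on01 (g : R -> R) : (forall t, 0 < t < 1 -> g t = 0) -> RInt g 0 1 = 0.
Proof.
  intros H. rewrite (RInt_ext _ (fun _ => 0)), (RInt_const (V := R_CompleteNormedModule)).
  - apply Rmult_0_r.
  - intros t Ht. rewrite Rmin_left, Rmax_right in Ht by lra. apply H, Ht.
Qed.

Lemma RInt_mult_minus (K p1 p2 : R -> R) :
  ex_RInt (fun t => K t * p1 t) 0 1 -> ex_RInt (fun t => K t * p2 t) 0 1 ->
  RInt (fun t => K t * p1 t) 0 1 - RInt (fun t => K t * p2 t) 0 1
  = RInt (fun t => K t * (p1 t - p2 t)) 0 1.
Proof.
  intros H1 H2. rewrite <- RInt_minusR by auto. apply RInt_extR. intros; ring.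
Qed.

Lemma abs_RInt_mult_le (K p : R -> R) B :
  ex_RInt (fun t => K t * p t) 0 1 -> ex_RInt (fun t => Rabs (K t)) 0 1 ->
  (forall t, 0 < t < 1 -> Rabs (p t) <= B) ->
  Rabs (RInt (fun t => K t * p t) 0 1) <= RInt (fun t => Rabs (K t)) 0 1 * B.
Proof.
  intros HKp HK Hp.
  set (w := fun t => B * Rabs (K t)).
  assert (Hw : ex_RInt w 0 1)
    by (apply (ex_RInt_scal (V := R_CompleteNormedModule) (fun t => Rabs (K t))); auto).
  assert (Ew : RInt w 0 1 = RInt (fun t => Rabs (K t)) 0 1 * B).
  { rewrite Rmult_comm.
    apply (RInt_scal (V := R_CompleteNormedModule) (fun t => Rabs (K t))); auto. }
  assert (Kp : forall t, 0 < t < 1 -> - w t <= K t * p t <= w t).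
  { intros t Ht. apply Rabs_le_between. unfold w. rewrite Rabs_mult, (Rmult_comm B).
    apply Rmult_le_compat_l; [apply Rabs_pos | auto]. }
  rewrite <- Ew. apply Rabs_le. split.
  - rewrite <- (RInt_opp (V := R_CompleteNormedModule) w) by auto.
    apply RInt_le; [lra | apply (ex_RInt_opp (V := R_CompleteNormedModule) w); auto | auto |].
    intros t Ht. apply Kp, Ht.
  - apply RInt_le; [lra | auto | auto |]. intros t Ht. apply Kp, Ht.
Qed.

Lemma continuity_pos_near g s0 : continuity g -> 0 <= s0 <= 1 -> 0 < g s0 ->
  exists a b, (0 <= a /\ a < b /\ b <= 1) /\ forall s, a < s < b -> 0 < g s.
Proof.
  intros Hg Hs0 Hpos.
  destruct (proj1 (continuity_pt_eps g s0) (Hg s0) (g s0 / 2)) as [d [Hd K]]; [lra|].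
  exists (Rmax 0 (s0 - d / 2)), (Rmin 1 (s0 + d / 2)).
  assert (Hab : 0 <= Rmax 0 (s0 - d / 2) /\ Rmax 0 (s0 - d / 2) < Rmin 1 (s0 + d / 2)
                /\ Rmin 1 (s0 + d / 2) <= 1)
    by (unfold Rmax, Rmin; repeat destruct Rle_dec; lra).
  split; auto. intros s Hs.
  assert (Hsd : Rabs (s - s0) < d).
  { apply Rabs_def1; unfold Rmax, Rmin in Hs; repeat destruct Rle_dec; lra. }
  specialize (K s Hsd). apply Rabs_def2 in K. lra.
Qed.

Lemma RInt_pos_of_pos_on_subinterval g a b : continuity g -> 0 <= a /\ a < b /\ b <= 1 ->
  (forall s, 0 < s < 1 -> 0 <= g s) -> (forall s, a < s < b -> 0 < g s) ->
  0 < RInt g 0 1.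
Proof.
  intros Hg Hab Hnn Hpos.
  assert (Ex : forall c d, ex_RInt g c d) by (intros; apply ex_RInt_continuity, Hg).
  rewrite <- (RInt_ChaslesR g 0 a 1), <- (RInt_ChaslesR g a b 1) by auto.
  assert (0 <= RInt g 0 a) by (apply RInt_ge_0; auto; [lra | intros; apply Hnn; lra]).
  assert (0 <= RInt g b 1) by (apply RInt_ge_0; auto; [lra | intros; apply Hnn; lra]).
  assert (0 < RInt g a b); [|lra].
  apply RInt_gt_0; [lra | auto | intros; apply continuous_of_continuity, Hg].
Qed.

Lemma continuity_piecewise p q x0 : continuity p -> continuity q -> p x0 = q x0 ->
  continuity (fun s => if Rle_dec s x0 then p s else q s).
Proof.
  intros Hp Hq E s0. apply continuity_pt_eps. intros eps He.
  destruct (proj1 (continuity_pt_eps p s0) (Hp s0) eps He) as [dp [Hdp Kp]].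
  destruct (proj1 (continuity_pt_eps q s0) (Hq s0) eps He) as [dq [Hdq Kq]].
  destruct (Rtotal_order s0 x0) as [Hl | [-> | Hg]].
  - exists (Rmin dp (x0 - s0)). split; [apply Rmin_pos; lra|].
    intros y Hy. pose proof (Rmin_l dp (x0 - s0)). pose proof (Rmin_r dp (x0 - s0)).
    apply Rabs_lt_between in Hy.
    destruct (Rle_dec y x0); [|lra]. destruct (Rle_dec s0 x0); [|lra].
    apply Kp. apply Rabs_def1; lra.
  - exists (Rmin dp dq). split; [apply Rmin_pos; lra|].
    intros y Hy. pose proof (Rmin_l dp dq). pose proof (Rmin_r dp dq).
    destruct (Rle_dec x0 x0); [|lra].
    destruct (Rle_dec y x0); [apply Kp; lra | rewrite E; apply Kq; lra].
  - exists (Rmin dq (s0 - x0)). split; [apply Rmin_pos; lra|].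
    intros y Hy. pose proof (Rmin_l dq (s0 - x0)). pose proof (Rmin_r dq (s0 - x0)).
    apply Rabs_lt_between in Hy.
    destruct (Rle_dec y x0); [lra|]. destruct (Rle_dec s0 x0); [lra|].
    apply Kq. apply Rabs_def1; lra.
Qed.

Lemma max01_spec F B : (forall x, 0 <= x <= 1 -> 0 <= F x <= B) ->
  (forall x, 0 <= x <= 1 -> F x <= max01 F) /\ 0 <= max01 F <= B.
Proof.
  intros H. unfold max01.
  set (S := fun y => exists x, 0 <= x <= 1 /\ y = F x).
  destruct (Lub_Rbar_correct S) as [Hub Hlub].
  assert (U : Rbar_le (Lub_Rbar S) B) by (apply Hlub; intros y [x [Hx ->]]; apply H, Hx).
  assert (L : forall x, 0 <= x <= 1 -> Rbar_le (F x) (Lub_Rbar S))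
    by (intros x Hx; apply Hub; exists x; auto).
  pose proof (L 0 ltac:(lra)) as L0. pose proof (proj1 (H 0 ltac:(lra))).
  destruct (Lub_Rbar S) as [r | |]; simpl in *; try easy.
  repeat split; auto; lra.
Qed.

Lemma cont_on01_RInt_param (K : R -> R -> R) :
  (forall x, 0 <= x <= 1 -> forall eps, 0 < eps -> exists d, 0 < d /\
     forall x' t, 0 <= x' <= 1 -> 0 <= t <= 1 -> Rabs (x' - x) < d ->
       Rabs (K x' t - K x t) < eps) ->
  (forall x, 0 <= x <= 1 -> continuity (fun t => K x (clamp01 t))) ->
  cont_on01 (fun x => RInt (K x) 0 1).
Proof.
  intros Hunif Hcont x Hx eps He.
  destruct (Hunif x Hx (eps / 2) ltac:(lra)) as [d [Hd K1]].
  exists d. split; auto. intros y Hy Hyd.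
  assert (Ex : forall z, 0 <= z <= 1 -> ex_RInt (K z) 0 1)
    by (intros z Hz; apply ex_RInt_01_clamp, Hcont, Hz).
  rewrite <- RInt_minusR by auto.
  apply Rle_lt_trans with ((1 - 0) * (eps / 2)); [|lra].
  apply abs_RInt_le_const; [lra | apply (ex_RInt_minus (V := R_CompleteNormedModule)); auto |].
  intros t Ht. left. apply K1; auto.
Qed.

Lemma Rabs_le0_eq a b : Rabs (a - b) <= 0 -> a = b.
Proof. intros H. apply Rminus_diag_uniq, Rabs_eq_0, Rle_antisym; auto. apply Rabs_pos. Qed.

Section Contraction.

Variable P : (R -> R) -> Prop.
Variable T : (R -> R) -> R -> R.
Variables q C : R.
Hypothesis q_ge0 : 0 <= q.
Hypothesis q_lt1 : q < 1.
Hypothesis T_stable : forall g, P g -> P (T g).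
(* Only the values on (0,1) are compared: [T] sees its argument through
   integrals over [0,1]. *)
Hypothesis T_contraction : forall g h d, P g -> P h ->
  (forall s, 0 < s < 1 -> Rabs (g s - h s) <= d) -> forall x, Rabs (T g x - T h x) <= q * d.
Hypothesis P_bounded : forall g h x, P g -> P h -> Rabs (g x - h x) <= C.
Hypothesis P_closed : forall g,
  (forall eps, 0 < eps -> exists h, P h /\ forall x, Rabs (g x - h x) <= eps) -> P g.

Lemma le0_of_geometric a c : (forall n, a <= c * q ^ n) -> a <= 0.
Proof.
  intros H.
  assert (Hlim : is_lim_seq (fun n => c * q ^ n) (c * 0)).
  { apply (is_lim_seq_scal_l _ c 0), is_lim_seq_geom. rewrite Rabs_pos_eq; lra. }
  pose proof (is_lim_seq_le _ _ a (c * 0) H (is_lim_seq_const a) Hlim) as Ha.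
  simpl in Ha. lra.
Qed.

Lemma contraction_unique g h : P g -> P h ->
  (forall s, 0 < s < 1 -> T g s = g s) -> (forall s, 0 < s < 1 -> T h s = h s) ->
  forall s, 0 < s < 1 -> g s = h s.
Proof.
  intros Pg Ph Fg Fh.
  assert (D : forall n s, 0 < s < 1 -> Rabs (g s - h s) <= C * q ^ n).
  { induction n as [|n IH]; intros s Hs.
    - rewrite pow_O, Rmult_1_r. apply P_bounded; auto.
    - rewrite <- Fg, <- Fh by auto. replace (C * q ^ S n) with (q * (C * q ^ n)) by (simpl; ring).
      apply T_contraction; auto. }
  intros s Hs. apply Rabs_le0_eq, (le0_of_geometric _ C). intro n. apply D, Hs.
Qed.

Section Iteration.

Variable g0 : R -> R.
Hypothesis P_g0 : P g0.

Let iterate n := Nat.iter n T g0.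
Let tail n := C * q ^ n / (1 - q).

Lemma C_ge0 : 0 <= C.
Proof. pose proof (P_bounded g0 g0 0 P_g0 P_g0). pose proof (Rabs_pos (g0 0 - g0 0)). lra. Qed.

Lemma tail_ge0 n : 0 <= tail n.
Proof.
  apply Rdiv_le_0_compat; [apply Rmult_le_pos; [apply C_ge0 | apply pow_le; lra] | lra].
Qed.

Lemma P_iterate n : P (iterate n).
Proof. induction n as [|n IH]; [exact P_g0 | apply T_stable, IH]. Qed.

Lemma iterate_step n x : Rabs (iterate (S n) x - iterate n x) <= C * q ^ n.
Proof.
  revert x. induction n as [|n IH]; intro x.
  - rewrite pow_O, Rmult_1_r. apply P_bounded; [apply T_stable |]; exact P_g0.
  - replace (C * q ^ S n) with (q * (C * q ^ n)) by (simpl; ring).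
    apply (T_contraction (iterate (S n)) (iterate n)); try apply P_iterate.
    intros s _. apply IH.
Qed.

Lemma iterate_tail n m x : (n <= m)%nat -> Rabs (iterate m x - iterate n x) <= tail n.
Proof.
  assert (Hqn : 0 <= C * q ^ n) by (apply Rmult_le_pos; [apply C_ge0 | apply pow_le; auto]).
  (* the partial sums of the geometric series of [iterate_step] *)
  assert (Hsum : forall j,
    Rabs (iterate (j + n) x - iterate n x) <= C * q ^ n * (1 - q ^ j) / (1 - q)).
  { induction j as [|j IH].
    - rewrite Nat.add_0_l, Rminus_eq_0, Rabs_R0, pow_O. unfold Rdiv. lra.
    - replace (iterate (S j + n) x - iterate n x) with
        ((iterate (S (j + n)) x - iterate (j + n) x) + (iterate (j + n) x - iterate n x))
        by (simpl; ring).
      eapply Rle_trans; [apply Rabs_triang|].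
      pose proof (iterate_step (j + n) x) as Hs. rewrite pow_add in Hs.
      apply Rle_trans with (C * (q ^ j * q ^ n) + C * q ^ n * (1 - q ^ j) / (1 - q)); [lra|].
      right. simpl. field. lra. }
  intros Hnm. replace m with ((m - n) + n)%nat by lia.
  eapply Rle_trans; [apply Hsum|]. unfold tail, Rdiv.
  apply Rmult_le_compat_r; [left; apply Rinv_0_lt_compat; lra|].
  pose proof (pow_le q (m - n) q_ge0). nra.
Qed.

Lemma tail_small eps : 0 < eps -> exists N, tail N < eps.
Proof.
  intros He.
  assert (Hlim : is_lim_seq tail (C * 0 / (1 - q))).
  { apply (is_lim_seq_div' _ (fun _ => 1 - q)); [| apply is_lim_seq_const | lra].
    apply (is_lim_seq_scal_l _ C 0), is_lim_seq_geom. rewrite Rabs_pos_eq; lra. }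
  replace (C * 0 / (1 - q)) with 0 in Hlim by (field; lra).
  destruct (proj2 (is_lim_seq_spec _ _) Hlim (mkposreal eps He)) as [N HN].
  exists N. specialize (HN N (le_n N)). simpl in HN. rewrite Rminus_0_r in HN.
  eapply Rle_lt_trans; [apply Rle_abs | exact HN].
Qed.

Let limit x := real (Lim_seq (fun n => iterate n x)).

Lemma is_lim_iterate x : is_lim_seq (fun n => iterate n x) (limit x).
Proof.
  assert (Ex : ex_finite_lim_seq (fun n => iterate n x)).
  { apply ex_lim_seq_cauchy_corr. intros eps.
    destruct (tail_small (eps / 2)) as [N HN]; [pose proof (cond_pos eps); lra|].
    exists N. intros n m Hn Hm.
    pose proof (iterate_tail N n x Hn). pose proof (iterate_tail N m x Hm).
    replace (iterate n x - iterate m x) with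
      ((iterate n x - iterate N x) - (iterate m x - iterate N x)) by ring.
    eapply Rle_lt_trans; [apply Rabs_triang|]. rewrite Rabs_Ropp. lra. }
  destruct Ex as [l Hl]. unfold limit. rewrite (is_lim_seq_unique _ _ Hl). exact Hl.
Qed.

Lemma limit_tail n x : Rabs (limit x - iterate n x) <= tail n.
Proof.
  assert (L : is_lim_seq (fun m => Rabs (iterate (m + n) x - iterate n x))
                         (Rabs (limit x - iterate n x))).
  { apply (is_lim_seq_abs _ (Finite (limit x - iterate n x))).
    apply is_lim_seq_minus'; [|apply is_lim_seq_const].
    apply (is_lim_seq_incr_n (fun m => iterate m x)), is_lim_iterate. }
  pose proof (is_lim_seq_le _ _ _ _ (fun m => iterate_tail n (m + n) x ltac:(lia))
                L (is_lim_seq_const (tail n))) as H.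
  exact H.
Qed.

Lemma contraction_fixed_point : exists g, P g /\ forall x, T g x = g x.
Proof.
  assert (Pl : P limit).
  { apply P_closed. intros eps He. destruct (tail_small eps He) as [N HN].
    exists (iterate N). split; [apply P_iterate|]. intro x. pose proof (limit_tail N x). lra. }
  exists limit. split; auto. intro x. apply Rabs_le0_eq.
  apply (le0_of_geometric _ (2 * C / (1 - q))). intro n.
  assert (A1 : Rabs (T limit x - T (iterate n) x) <= q * tail n)
    by (apply T_contraction; auto; [apply P_iterate | intros s _; apply limit_tail]).
  pose proof (limit_tail (S n) x) as A2.
  assert (Etail : tail (S n) = q * tail n) by (unfold tail; simpl; field; lra).
  pose proof (tail_ge0 n) as Htail.
  rewrite Etail in A2.
  replace (T limit x - limit x) with
    ((T limit x - T (iterate n) x) - (limit x - iterate (S n) x)) by (simpl; ring).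
  eapply Rle_trans; [apply Rabs_triang|]. rewrite Rabs_Ropp.
  replace (2 * C / (1 - q) * q ^ n) with (2 * tail n) by (unfold tail; field; lra).
  nra.
Qed.

End Iteration.

End Contraction.

Lemma continuity_G0 x : continuity (G0 x).
Proof. unfold G0. apply continuity_piecewise; [intro; reg | intro; reg | ring]. Qed.

Lemma continuity_G1 x : continuity (G1 x).
Proof. unfold G1. apply continuity_piecewise; [intro; reg | intro; reg | field]. Qed.

Lemma G0_bounds x s : 0 <= x <= 1 -> 0 <= s <= 1 -> 0 <= G0 x s <= 1.
Proof.
  intros Hx Hs. unfold G0. destruct Rle_dec.
  - assert (0 <= 2 * x - x ^ 2 - s ^ 2 <= 2) by nra.
    assert (0 <= s * (1 - x) <= 1) by nra. split; nra.
  - assert (0 <= 2 * s - s ^ 2 - x ^ 2 <= 2) by nra.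
    assert (0 <= x * (1 - s) <= 1) by nra. split; nra.
Qed.

Lemma G0_pos x s : 0 < x < 1 -> 0 < s < 1 -> 0 < G0 x s.
Proof.
  intros Hx Hs. unfold G0. destruct Rle_dec.
  - assert (0 < 2 * x - x ^ 2 - s ^ 2) by nra. assert (0 < s * (1 - x)) by nra. nra.
  - assert (0 < 2 * s - s ^ 2 - x ^ 2) by nra. assert (0 < x * (1 - s)) by nra. nra.
Qed.

Lemma G1_abs_le2 x s : 0 <= x <= 1 -> 0 <= s <= 1 -> Rabs (G1 x s) <= 2.
Proof.
  intros Hx Hs. unfold G1. apply Rabs_le. destruct Rle_dec.
  - assert (-4 <= 3 * x ^ 2 - 6 * x + s ^ 2 + 2 <= 6) by nra. split; nra.
  - assert (-2 <= 3 * x ^ 2 - 2 * s + s ^ 2 <= 4) by nra. split; nra.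
Qed.

Lemma continuity_abs_comp g : continuity g -> continuity (fun s => Rabs (g s)).
Proof. intros H s. apply (continuity_pt_comp g Rabs), Rcontinuity_abs. apply H. Qed.

Lemma RInt_abs_bounds g B : continuity g -> (forall s, 0 <= s <= 1 -> Rabs (g s) <= B) ->
  0 <= RInt (fun s => Rabs (g s)) 0 1 <= B.
Proof.
  intros Hg HB.
  assert (Hi : ex_RInt (fun s => Rabs (g s)) 0 1)
    by apply ex_RInt_continuity, continuity_abs_comp, Hg.
  split.
  - apply RInt_ge_0; auto; [lra | intros; apply Rabs_pos].
  - apply Rle_trans with (Rabs (RInt (fun s => Rabs (g s)) 0 1)); [apply Rle_abs|].
    replace B with ((1 - 0) * B) by ring. apply abs_RInt_le_const; auto; [lra|].
    intros s Hs. rewrite Rabs_Rabsolu. apply HB, Hs.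
Qed.

Lemma M0_spec : (forall x, 0 <= x <= 1 -> RInt (fun s => Rabs (G0 x s)) 0 1 <= M0) /\ 0 <= M0 <= 1.
Proof.
  apply max01_spec. intros x Hx. apply RInt_abs_bounds; [apply continuity_G0|].
  intros s Hs. pose proof (G0_bounds x s Hx Hs). rewrite Rabs_pos_eq; lra.
Qed.

Lemma M1_spec : (forall x, 0 <= x <= 1 -> RInt (fun s => Rabs (G1 x s)) 0 1 <= M1) /\ 0 <= M1 <= 2.
Proof.
  apply max01_spec. intros x Hx. apply RInt_abs_bounds; [apply continuity_G1|].
  intros s Hs. apply G1_abs_le2; auto.
Qed.

Definition Uop (psi : R -> R) (x : R) : R := RInt (fun s => G0 x s * psi s) 0 1.
Definition Vop (psi : R -> R) (x : R) : R := RInt (fun s => G1 x s * psi s) 0 1.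

Section GreenRepresentation.

Variable psi : R -> R.
Hypothesis psi_cont : continuity psi.

Definition moment (i : nat) (x : R) : R := RInt (fun s => s ^ i * psi s) 0 x.

Lemma continuity_moment_integrand i : continuity (fun s => s ^ i * psi s).
Proof. intro s. apply continuity_pt_mult; [reg | apply psi_cont]. Qed.

Lemma is_derive_moment i x : is_derive (moment i) x (x ^ i * psi x).
Proof.
  apply (is_derive_RInt (fun s => s ^ i * psi s) (moment i) 0 x).
  - exists (mkposreal 1 Rlt_0_1). intros y _.
    apply (RInt_correct (V := R_CompleteNormedModule)), ex_RInt_continuity,
      continuity_moment_integrand.
  - apply continuous_of_continuity, continuity_moment_integrand.
Qed.

Lemma moment_0 i : moment i 0 = 0.
Proof. apply (RInt_point (V := R_CompleteNormedModule)). Qed.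

Lemma RInt_moment_tail i x : RInt (fun s => s ^ i * psi s) x 1 = moment i 1 - moment i x :> R.
Proof.
  unfold moment.
  rewrite <- (RInt_ChaslesR _ 0 x 1) by apply ex_RInt_continuity, continuity_moment_integrand.
  lra.
Qed.

(* Expanding the cubic pieces of [G0] and [G1] in [s] turns [Uop psi] and its
   derivatives into polynomial combinations of the moments of [psi]. *)
Definition sol0 x := (x ^ 3 * moment 0 x - 3 * x ^ 2 * moment 1 x + 3 * x * moment 2 x - moment 3 x
   + x * (2 * moment 1 1 - 3 * moment 2 1 + moment 3 1) - x ^ 3 * (moment 0 1 - moment 1 1)) / 6.
Definition sol1 x := (3 * x ^ 2 * moment 0 x - 6 * x * moment 1 x + 3 * moment 2 x
   + (2 * moment 1 1 - 3 * moment 2 1 + moment 3 1) - 3 * x ^ 2 * (moment 0 1 - moment 1 1)) / 6.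
Definition sol2 x := x * moment 0 x - moment 1 x - x * (moment 0 1 - moment 1 1).
Definition sol3 x := moment 0 x - (moment 0 1 - moment 1 1).

Ltac derive_sol :=
  auto_derive; [repeat split; eexists; apply is_derive_moment |];
  rewrite !(is_derive_unique _ _ _ (is_derive_moment _ _)); simpl; field.

Lemma is_derive_sol0 x : is_derive sol0 x (sol1 x).
Proof. unfold sol0, sol1. derive_sol. Qed.

Lemma is_derive_sol1 x : is_derive sol1 x (sol2 x).
Proof. unfold sol1, sol2. derive_sol. Qed.

Lemma is_derive_sol2 x : is_derive sol2 x (sol3 x).
Proof. unfold sol2, sol3. derive_sol. Qed.

Lemma is_derive_sol3 x : is_derive sol3 x (psi x).
Proof. unfold sol3. derive_sol. Qed.

Lemma sol0_0 : sol0 0 = 0.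
Proof. unfold sol0. rewrite !moment_0. field. Qed.

Lemma sol0_1 : sol0 1 = 0.
Proof. unfold sol0. field. Qed.

Lemma sol2_0 : sol2 0 = 0.
Proof. unfold sol2. rewrite !moment_0. ring. Qed.

Lemma sol2_1 : sol2 1 = 0.
Proof. unfold sol2. ring. Qed.

Lemma RInt_cubic_moments a b c0 c1 c2 c3 :
  RInt (fun s => c0 * (s ^ 0 * psi s) + c1 * (s ^ 1 * psi s)
                 + c2 * (s ^ 2 * psi s) + c3 * (s ^ 3 * psi s)) a b
  = c0 * RInt (fun s => s ^ 0 * psi s) a b + c1 * RInt (fun s => s ^ 1 * psi s) a b
    + c2 * RInt (fun s => s ^ 2 * psi s) a b + c3 * RInt (fun s => s ^ 3 * psi s) a b :> R.
Proof.
  pose proof (fun i => RInt_correct (V := R_CompleteNormedModule) _ a b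
                 (ex_RInt_continuity _ a b (continuity_moment_integrand i))) as I.
  apply is_RInt_unique.
  apply (is_RInt_plus (V := R_CompleteNormedModule));
    [apply (is_RInt_plus (V := R_CompleteNormedModule));
     [apply (is_RInt_plus (V := R_CompleteNormedModule)) |] |];
    apply (is_RInt_scal (V := R_CompleteNormedModule)), I.
Qed.

Lemma RInt_piecewise_cubic (K : R -> R) x p0 p1 p2 p3 q0 q1 q2 q3 :
  0 <= x <= 1 -> continuity K ->
  (forall s, 0 < s < x -> K s = p0 + p1 * s + p2 * s ^ 2 + p3 * s ^ 3) ->
  (forall s, x < s < 1 -> K s = q0 + q1 * s + q2 * s ^ 2 + q3 * s ^ 3) ->
  RInt (fun s => K s * psi s) 0 1 =
    p0 * moment 0 x + p1 * moment 1 x + p2 * moment 2 x + p3 * moment 3 x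
    + q0 * (moment 0 1 - moment 0 x) + q1 * (moment 1 1 - moment 1 x)
    + q2 * (moment 2 1 - moment 2 x) + q3 * (moment 3 1 - moment 3 x) :> R.
Proof.
  intros Hx HK Hp Hq.
  assert (Hc : continuity (fun s => K s * psi s)) by (intro s; apply continuity_pt_mult; auto).
  rewrite <- (RInt_ChaslesR _ 0 x 1) by apply ex_RInt_continuity, Hc.
  rewrite (RInt_extR _ (fun s => p0 * (s ^ 0 * psi s) + p1 * (s ^ 1 * psi s)
                                 + p2 * (s ^ 2 * psi s) + p3 * (s ^ 3 * psi s)) 0 x).
  2:{ intros s Hs. rewrite Rmin_left, Rmax_right in Hs by lra. rewrite Hp by lra. ring. }
  rewrite (RInt_extR _ (fun s => q0 * (s ^ 0 * psi s) + q1 * (s ^ 1 * psi s)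
                                 + q2 * (s ^ 2 * psi s) + q3 * (s ^ 3 * psi s)) x 1).
  2:{ intros s Hs. rewrite Rmin_left, Rmax_right in Hs by lra. rewrite Hq by lra. ring. }
  rewrite !RInt_cubic_moments, !RInt_moment_tail. unfold moment. ring.
Qed.

Lemma Uop_sol0 x : 0 <= x <= 1 -> Uop psi x = sol0 x.
Proof.
  intros Hx. unfold Uop.
  rewrite (RInt_piecewise_cubic (G0 x) x 0 ((1 - x) * (2 * x - x ^ 2) / 6) 0 (- (1 - x) / 6)
             (- x ^ 3 / 6) ((2 * x + x ^ 3) / 6) (- 3 * x / 6) (x / 6)); auto.
  - unfold sol0. field.
  - apply continuity_G0.
  - intros s Hs. unfold G0. destruct Rle_dec; [field | lra].
  - intros s Hs. unfold G0. destruct Rle_dec; [lra | field].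
Qed.

Lemma Vop_sol1 x : 0 <= x <= 1 -> Vop psi x = sol1 x.
Proof.
  intros Hx. unfold Vop.
  rewrite (RInt_piecewise_cubic (G1 x) x 0 ((3 * x ^ 2 - 6 * x + 2) / 6) 0 (1 / 6)
             (- 3 * x ^ 2 / 6) ((3 * x ^ 2 + 2) / 6) (- 3 / 6) (1 / 6)); auto.
  - unfold sol1. field.
  - apply continuity_G1.
  - intros s Hs. unfold G1. destruct Rle_dec; [field | lra].
  - intros s Hs. unfold G1. destruct Rle_dec; [lra | field].
Qed.

Lemma deriv_on01_Uop : deriv_on01 (Uop psi) (Vop psi).
Proof.
  apply (deriv_on01_ext sol0 sol1);
    [| intros; symmetry; apply Uop_sol0 | intros; symmetry; apply Vop_sol1]; auto.
  apply deriv_on01_is_derive, is_derive_sol0.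
Qed.

Lemma deriv_on01_Vop : deriv_on01 (Vop psi) sol2.
Proof.
  apply (deriv_on01_ext sol1 sol2); [| intros; symmetry; apply Vop_sol1 |]; auto.
  apply deriv_on01_is_derive, is_derive_sol1.
Qed.

End GreenRepresentation.

Lemma cont_on01_Uop psi : continuity psi -> cont_on01 (Uop psi).
Proof. intros H. apply (deriv_on01_cont _ _ (deriv_on01_Uop psi H)). Qed.

Lemma cont_on01_Vop psi : continuity psi -> cont_on01 (Vop psi).
Proof. intros H. apply (deriv_on01_cont _ _ (deriv_on01_Vop psi H)). Qed.

Lemma bvp_homogeneous d d1 d2 d3 d4 :
  deriv_on01 d d1 -> deriv_on01 d1 d2 -> deriv_on01 d2 d3 -> deriv_on01 d3 d4 ->
  (forall x, 0 <= x <= 1 -> d4 x = 0) ->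
  d 0 = 0 -> d 1 = 0 -> d2 0 = 0 -> d2 1 = 0 ->
  forall x, 0 <= x <= 1 -> d x = 0 /\ d1 x = 0.
Proof.
  intros D1 D2 D3 D4 Z4 B0 B1 B20 B21.
  pose proof (deriv_on01_zero_const _ _ D4 Z4) as C3.
  pose proof (deriv_on01_const_affine _ _ _ D3 C3) as A2.
  assert (Z2 : forall x, 0 <= x <= 1 -> d2 x = 0).
  { pose proof (A2 1 ltac:(lra)). intros x Hx. specialize (A2 x Hx). nra. }
  pose proof (deriv_on01_zero_const _ _ D2 Z2) as C1.
  pose proof (deriv_on01_const_affine _ _ _ D1 C1) as A0.
  pose proof (A0 1 ltac:(lra)) as A01.
  intros x Hx. specialize (A0 x Hx). specialize (C1 x Hx). split; nra.
Qed.

Lemma bvp_solution_eq psi w w1 w2 w3 w4 : continuity psi ->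
  deriv_on01 w w1 -> deriv_on01 w1 w2 -> deriv_on01 w2 w3 -> deriv_on01 w3 w4 ->
  (forall x, 0 <= x <= 1 -> w4 x = psi x) ->
  w 0 = 0 -> w 1 = 0 -> w2 0 = 0 -> w2 1 = 0 ->
  forall x, 0 <= x <= 1 -> w x = sol0 psi x /\ w1 x = sol1 psi x.
Proof.
  intros Hc D1 D2 D3 D4 E4 B0 B1 B20 B21 x Hx.
  assert (H : w x - sol0 psi x = 0 /\ w1 x - sol1 psi x = 0).
  { apply (bvp_homogeneous (fun y => w y - sol0 psi y) (fun y => w1 y - sol1 psi y)
             (fun y => w2 y - sol2 psi y) (fun y => w3 y - sol3 psi y)
             (fun y => w4 y - psi y)); auto.
    - exact (deriv_on01_minus _ _ _ _ D1 (deriv_on01_is_derive _ _ (is_derive_sol0 psi Hc))).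
    - exact (deriv_on01_minus _ _ _ _ D2 (deriv_on01_is_derive _ _ (is_derive_sol1 psi Hc))).
    - exact (deriv_on01_minus _ _ _ _ D3 (deriv_on01_is_derive _ _ (is_derive_sol2 psi Hc))).
    - exact (deriv_on01_minus _ _ _ _ D4 (deriv_on01_is_derive _ _ (is_derive_sol3 psi Hc))).
    - intros y Hy. rewrite E4 by auto. ring.
    - rewrite B0, sol0_0. ring.
    - rewrite B1, sol0_1. ring.
    - cbv beta. rewrite B20, sol2_0. ring.
    - cbv beta. rewrite B21, sol2_1. ring. }
  lra.
Qed.

Lemma ex_RInt_G0_mult psi x : continuity psi -> ex_RInt (fun s => G0 x s * psi s) 0 1.
Proof.
  intros H. apply ex_RInt_continuity. intro s.
  apply continuity_pt_mult; [apply continuity_G0 | apply H].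
Qed.

Lemma ex_RInt_G1_mult psi x : continuity psi -> ex_RInt (fun s => G1 x s * psi s) 0 1.
Proof.
  intros H. apply ex_RInt_continuity. intro s.
  apply continuity_pt_mult; [apply continuity_G1 | apply H].
Qed.

Lemma Uop_minus psi1 psi2 x : continuity psi1 -> continuity psi2 ->
  Uop psi1 x - Uop psi2 x = Uop (fun s => psi1 s - psi2 s) x.
Proof. intros. apply RInt_mult_minus; apply ex_RInt_G0_mult; auto. Qed.

Lemma Vop_minus psi1 psi2 x : continuity psi1 -> continuity psi2 ->
  Vop psi1 x - Vop psi2 x = Vop (fun s => psi1 s - psi2 s) x.
Proof. intros. apply RInt_mult_minus; apply ex_RInt_G1_mult; auto. Qed.

Lemma Uop_ext psi1 psi2 x : (forall s, 0 < s < 1 -> psi1 s = psi2 s) -> Uop psi1 x = Uop psi2 x.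
Proof.
  intros H. apply RInt_extR. intros s Hs. rewrite Rmin_left, Rmax_right in Hs by lra.
  rewrite H by auto. reflexivity.
Qed.

Lemma bound_nonneg (psi : R -> R) B : (forall s, 0 < s < 1 -> Rabs (psi s) <= B) -> 0 <= B.
Proof. intros H. pose proof (H (1 / 2) ltac:(lra)). pose proof (Rabs_pos (psi (1 / 2))). lra. Qed.

Lemma Uop_abs_le psi B x : continuity psi -> (forall s, 0 < s < 1 -> Rabs (psi s) <= B) ->
  0 <= x <= 1 -> Rabs (Uop psi x) <= M0 * B.
Proof.
  intros Hc HB Hx. eapply Rle_trans.
  - apply abs_RInt_mult_le; auto; [apply ex_RInt_G0_mult, Hc |].
    apply ex_RInt_continuity, continuity_abs_comp, continuity_G0.
  - apply Rmult_le_compat_r; [apply (bound_nonneg psi), HB | apply M0_spec, Hx].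
Qed.

Lemma Vop_abs_le psi B x : continuity psi -> (forall s, 0 < s < 1 -> Rabs (psi s) <= B) ->
  0 <= x <= 1 -> Rabs (Vop psi x) <= M1 * B.
Proof.
  intros Hc HB Hx. eapply Rle_trans.
  - apply abs_RInt_mult_le; auto; [apply ex_RInt_G1_mult, Hc |].
    apply ex_RInt_continuity, continuity_abs_comp, continuity_G1.
  - apply Rmult_le_compat_r; [apply (bound_nonneg psi), HB | apply M1_spec, Hx].
Qed.

Lemma Uop_nonneg psi x : continuity psi -> (forall s, 0 < s < 1 -> 0 <= psi s) ->
  0 <= x <= 1 -> 0 <= Uop psi x.
Proof.
  intros Hc Hpos Hx. apply RInt_ge_0; [lra | apply ex_RInt_G0_mult, Hc |].
  intros s Hs. apply Rmult_le_pos; [apply G0_bounds; lra | apply Hpos, Hs].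
Qed.

Lemma Uop_pos psi x : continuity psi -> (forall s, 0 < s < 1 -> 0 <= psi s) ->
  (exists s0, 0 <= s0 <= 1 /\ 0 < psi s0) -> 0 < x < 1 -> 0 < Uop psi x.
Proof.
  intros Hc Hnn [s0 [Hs0 Hpos]] Hx.
  destruct (continuity_pos_near psi s0 Hc Hs0 Hpos) as [a [b [Hab Hab']]].
  apply (RInt_pos_of_pos_on_subinterval _ a b); auto.
  - intro s. apply continuity_pt_mult; [apply continuity_G0 | apply Hc].
  - intros s Hs. apply Rmult_le_pos; [apply G0_bounds; lra | auto].
  - intros s Hs. apply Rmult_lt_0_compat; [apply G0_pos; lra | auto].
Qed.

Section Kernel.

Variable k : R -> R -> R.
Hypothesis k_cont : cont_square k.

(* [d] is a Lebesgue number ([compactness_value_1d]) for the cover of [0,1] by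
   the continuity radii of [k] at the points [(x, t)]. *)
Lemma cont_square_unif x : 0 <= x <= 1 -> forall eps, 0 < eps -> exists d, 0 < d /\
  forall x' t, 0 <= x' <= 1 -> 0 <= t <= 1 -> Rabs (x' - x) < d -> Rabs (k x' t - k x t) < eps.
Proof.
  intros Hx eps He.
  assert (Ex : forall t, exists d : posreal, 0 <= t <= 1 ->
      forall x' s', 0 <= x' <= 1 -> 0 <= s' <= 1 ->
      Rabs (x' - x) < d -> Rabs (s' - t) < d -> Rabs (k x' s' - k x t) < eps / 2).
  { intro t. destruct (classic (0 <= t <= 1)) as [Ht | Ht].
    - destruct (k_cont x t Hx Ht (eps / 2) ltac:(lra)) as [d [Hd K]].
      exists (mkposreal d Hd). intros _. exact K.
    - exists (mkposreal 1 Rlt_0_1). tauto. }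
  set (delta := fun t => proj1_sig (constructive_indefinite_description _ (Ex t))).
  assert (Hdel : forall t, 0 <= t <= 1 -> forall x' s', 0 <= x' <= 1 -> 0 <= s' <= 1 ->
      Rabs (x' - x) < delta t -> Rabs (s' - t) < delta t -> Rabs (k x' s' - k x t) < eps / 2).
  { intro t. unfold delta.
    destruct (constructive_indefinite_description _ (Ex t)) as [d Hd]. exact Hd. }
  destruct (compactness_value_1d 0 1 delta) as [d Hd].
  exists d. split; [apply cond_pos|]. intros x' t Hx' Ht Hxx.
  apply NNPP. intro Hneg. apply (Hd t Ht). intros [t0 [Ht0 [H1 H2]]]. apply Hneg.
  assert (A1 : Rabs (k x' t - k x t0) < eps / 2) by (apply Hdel; auto; lra).
  assert (A2 : Rabs (k x t - k x t0) < eps / 2).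
  { apply Hdel; auto. rewrite Rminus_eq_0, Rabs_R0. apply cond_pos. }
  replace (k x' t - k x t) with ((k x' t - k x t0) - (k x t - k x t0)) by ring.
  eapply Rle_lt_trans; [apply Rabs_triang|]. rewrite Rabs_Ropp. lra.
Qed.

Lemma cont_on01_k x : 0 <= x <= 1 -> cont_on01 (k x).
Proof.
  intros Hx t Ht eps He. destruct (k_cont x t Hx Ht eps He) as [d [Hd K]].
  exists d. split; auto. intros y Hy Hyd. apply K; auto. rewrite Rminus_eq_0, Rabs_R0; lra.
Qed.

Lemma ex_RInt_k_mult g x : cont_on01 g -> 0 <= x <= 1 -> ex_RInt (fun t => k x t * g t) 0 1.
Proof.
  intros Hg Hx. apply ex_RInt_01_clamp. intro t.
  apply continuity_pt_mult; apply continuity_clamp01_comp; auto. apply cont_on01_k, Hx.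
Qed.

Lemma ex_RInt_abs_k x : 0 <= x <= 1 -> ex_RInt (fun t => Rabs (k x t)) 0 1.
Proof.
  intros Hx. apply ex_RInt_01_clamp, continuity_abs_comp, continuity_clamp01_comp, cont_on01_k, Hx.
Qed.

Lemma M2_spec : (forall x, 0 <= x <= 1 -> RInt (fun t => Rabs (k x t)) 0 1 <= M2 k) /\ 0 <= M2 k.
Proof.
  set (F := fun x => RInt (fun t => Rabs (k x t)) 0 1).
  assert (CF : cont_on01 F).
  { apply (cont_on01_RInt_param (fun x t => Rabs (k x t))).
    - intros x Hx eps He. destruct (cont_square_unif x Hx eps He) as [d [Hd K]].
      exists d. split; auto. intros. eapply Rle_lt_trans; [apply Rabs_triang_inv2 | auto].
    - intros x Hx. apply continuity_abs_comp, continuity_clamp01_comp, cont_on01_k, Hx. }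
  destruct (continuity_ab_maj (fun x => F (clamp01 x)) 0 1 ltac:(lra)
              (fun c _ => continuity_clamp01_comp F CF c)) as [xmax [Hmax _]].
  destruct (max01_spec F (F (clamp01 xmax))) as [A [B _]]; [| split; auto].
  intros x Hx. split.
  - apply RInt_ge_0; [lra | apply ex_RInt_abs_k, Hx | intros; apply Rabs_pos].
  - specialize (Hmax x Hx). rewrite clamp01_id in Hmax by auto. exact Hmax.
Qed.

Lemma abs_RInt_k_mult_le g B x : cont_on01 g -> (forall t, 0 < t < 1 -> Rabs (g t) <= B) ->
  0 <= x <= 1 -> Rabs (RInt (fun t => k x t * g t) 0 1) <= M2 k * B.
Proof.
  intros Hg HB Hx. eapply Rle_trans.
  - apply abs_RInt_mult_le; auto; [apply ex_RInt_k_mult | apply ex_RInt_abs_k]; auto.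
  - apply Rmult_le_compat_r; [apply (bound_nonneg g), HB | apply M2_spec, Hx].
Qed.

Lemma cont_on01_RInt_k_mult g B : cont_on01 g -> (forall t, 0 <= t <= 1 -> Rabs (g t) <= B) ->
  cont_on01 (fun x => RInt (fun t => k x t * g t) 0 1).
Proof.
  intros Hg HB.
  assert (B0 : 0 <= B) by (pose proof (HB 0 ltac:(lra)); pose proof (Rabs_pos (g 0)); lra).
  apply (cont_on01_RInt_param (fun x t => k x t * g t)).
  - intros x Hx eps He.
    destruct (cont_square_unif x Hx (eps / (B + 1))) as [d [Hd K]]; [apply Rdiv_lt_0_compat; lra|].
    exists d. split; auto. intros x' t Hx' Ht Hxd.
    rewrite <- Rmult_minus_distr_r, Rabs_mult.
    specialize (K x' t Hx' Ht Hxd). specialize (HB t Ht).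
    apply Rle_lt_trans with (eps / (B + 1) * B); [apply Rmult_le_compat; try apply Rabs_pos; lra|].
    replace (eps / (B + 1) * B) with (eps - eps / (B + 1)) by (field; lra).
    assert (0 < eps / (B + 1)) by (apply Rdiv_lt_0_compat; lra). lra.
  - intros x Hx t.
    apply continuity_pt_mult; apply continuity_clamp01_comp; auto. apply cont_on01_k, Hx.
Qed.

End Kernel.

Definition Zop (k : R -> R -> R) (psi : R -> R) (x : R) : R :=
  RInt (fun t => k x t * Uop psi t) 0 1.

(* The operator [psi |-> f(x, U psi, (U psi)', Z psi)] whose fixed points are the
   fourth derivatives of the solutions; clamping [x] into [0,1] makes [Top psi]
   continuous on all of [R]. *)
Definition Top (k : R -> R -> R) (f : R -> R -> R -> R -> R) (psi : R -> R) (x : R) : R :=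
  f (clamp01 x) (Uop psi (clamp01 x)) (Vop psi (clamp01 x)) (Zop k psi (clamp01 x)).

Definition admissible (M : R) (psi : R -> R) : Prop :=
  continuity psi /\ forall x, 0 <= psi x <= M.

Section Main.

Variable k : R -> R -> R.
Variable f : R -> R -> R -> R -> R.
Variables M L0 L1 L2 : R.
Hypothesis k_cont : cont_square k.
Hypothesis M_pos : 0 < M.
Hypothesis L0_ge0 : 0 <= L0.
Hypothesis L1_ge0 : 0 <= L1.
Hypothesis L2_ge0 : 0 <= L2.
Hypothesis f_cont : cont_on_D k M f.
Hypothesis f_range : forall x u v z, inD k M x u v z -> 0 <= f x u v z <= M.
Hypothesis f_lipschitz : forall x1 u1 v1 z1 x2 u2 v2 z2,
  inD k M x1 u1 v1 z1 -> inD k M x2 u2 v2 z2 ->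
  Rabs (f x2 u2 v2 z2 - f x1 u1 v1 z1)
    <= L0 * Rabs (u2 - u1) + L1 * Rabs (v2 - v1) + L2 * Rabs (z2 - z1).
Hypothesis q_lt1 : L0 * M0 + L1 * M1 + L2 * M2 k < 1.

Let q := L0 * M0 + L1 * M1 + L2 * M2 k.

Lemma Zop_minus psi1 psi2 x : continuity psi1 -> continuity psi2 -> 0 <= x <= 1 ->
  Zop k psi1 x - Zop k psi2 x = Zop k (fun s => psi1 s - psi2 s) x.
Proof.
  intros H1 H2 Hx. unfold Zop.
  rewrite RInt_mult_minus by (apply ex_RInt_k_mult; auto; apply cont_on01_Uop; auto).
  apply RInt_extR. intros t Ht. rewrite Uop_minus; auto.
Qed.

Lemma Zop_abs_le psi B x : continuity psi -> (forall s, 0 < s < 1 -> Rabs (psi s) <= B) ->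
  0 <= x <= 1 -> Rabs (Zop k psi x) <= M0 * M2 k * B.
Proof.
  intros Hc HB Hx. rewrite (Rmult_comm M0), Rmult_assoc.
  apply abs_RInt_k_mult_le; auto; [apply cont_on01_Uop, Hc|].
  intros t Ht. apply Uop_abs_le; auto. lra.
Qed.

Lemma admissible_abs_le psi : admissible M psi -> forall s, Rabs (psi s) <= M.
Proof. intros [_ H] s. specialize (H s). rewrite Rabs_pos_eq; lra. Qed.

Lemma inD_Uop psi x : admissible M psi -> 0 <= x <= 1 ->
  inD k M x (Uop psi x) (Vop psi x) (Zop k psi x).
Proof.
  intros Hp Hx. pose proof (admissible_abs_le psi Hp) as HB. destruct Hp as [Hc Hr].
  split; [auto | split; [split | split]].
  - apply Uop_nonneg; auto. intros s _. apply Hr.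
  - eapply Rle_trans; [apply Rle_abs | apply Uop_abs_le; auto].
  - apply Vop_abs_le; auto.
  - apply Zop_abs_le; auto.
Qed.

Lemma Top_range psi x : admissible M psi -> 0 <= Top k f psi x <= M.
Proof. intros Hp. apply f_range, inD_Uop; auto. apply clamp01_in. Qed.

Lemma continuity_Top psi : admissible M psi -> continuity (Top k f psi).
Proof.
  intros Hp x0. pose proof (admissible_abs_le psi Hp) as HB.
  apply continuity_pt_eps. intros eps He.
  destruct (f_cont _ _ _ _ (inD_Uop psi (clamp01 x0) Hp (clamp01_in x0)) eps He) as [d [Hd K]].
  assert (Hcomp : forall g, cont_on01 g ->
    exists e, 0 < e /\ forall y, Rabs (y - x0) < e -> Rabs (g (clamp01 y) - g (clamp01 x0)) < d).
  { intros g Hg. apply (proj1 (continuity_pt_eps (fun y => g (clamp01 y)) x0)); auto.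
    apply continuity_clamp01_comp, Hg. }
  destruct (Hcomp (Uop psi)) as [d1 [Hd1 K1]]; [apply cont_on01_Uop, Hp|].
  destruct (Hcomp (Vop psi)) as [d2 [Hd2 K2]]; [apply cont_on01_Vop, Hp|].
  destruct (Hcomp (Zop k psi)) as [d3 [Hd3 K3]].
  { apply (cont_on01_RInt_k_mult k k_cont (Uop psi) (M0 * M)); [apply cont_on01_Uop, Hp|].
    intros t Ht. apply Uop_abs_le; auto. apply Hp. }
  exists (Rmin (Rmin d d1) (Rmin d2 d3)). split; [repeat apply Rmin_pos; auto|].
  intros y Hy.
  pose proof (Rmin_l (Rmin d d1) (Rmin d2 d3)). pose proof (Rmin_r (Rmin d d1) (Rmin d2 d3)).
  pose proof (Rmin_l d d1). pose proof (Rmin_r d d1).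
  pose proof (Rmin_l d2 d3). pose proof (Rmin_r d2 d3).
  apply K; [apply inD_Uop, clamp01_in; auto | | apply K1 | apply K2 | apply K3]; try lra.
  eapply Rle_lt_trans; [apply clamp01_lipschitz | lra].
Qed.

Lemma Top_contraction psi1 psi2 d : admissible M psi1 -> admissible M psi2 ->
  (forall s, 0 < s < 1 -> Rabs (psi1 s - psi2 s) <= d) ->
  forall x, Rabs (Top k f psi1 x - Top k f psi2 x) <= q * d.
Proof.
  intros P1 P2 Hd x.
  pose proof (clamp01_in x) as Hx. set (y := clamp01 x) in *.
  assert (Hc : continuity (fun s => psi1 s - psi2 s))
    by (apply continuity_minus; [apply P1 | apply P2]).
  assert (HU : Rabs (Uop psi1 y - Uop psi2 y) <= M0 * d)
    by (rewrite Uop_minus by (apply P1 || apply P2); apply Uop_abs_le; auto).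
  assert (HV : Rabs (Vop psi1 y - Vop psi2 y) <= M1 * d)
    by (rewrite Vop_minus by (apply P1 || apply P2); apply Vop_abs_le; auto).
  assert (HZ : Rabs (Zop k psi1 y - Zop k psi2 y) <= M0 * M2 k * d)
    by (rewrite Zop_minus by (auto; apply P1 || apply P2); apply Zop_abs_le; auto).
  pose proof (bound_nonneg _ _ Hd) as Hd0.
  destruct M0_spec as [_ [M0_ge0 M0_le1]]. destruct (M2_spec k k_cont) as [_ M2_ge0].
  assert (M0 * M2 k * d <= M2 k * d).
  { rewrite Rmult_assoc. rewrite <- (Rmult_1_l (M2 k * d)) at 2.
    apply Rmult_le_compat_r; [apply Rmult_le_pos|]; auto. }
  unfold Top. fold y.
  eapply Rle_trans; [apply f_lipschitz; apply inD_Uop; auto|].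
  unfold q. nra.
Qed.

Lemma admissible_closed psi :
  (forall eps, 0 < eps -> exists h, admissible M h /\ forall x, Rabs (psi x - h x) <= eps) ->
  admissible M psi.
Proof.
  intros H. split.
  - intro x0. apply continuity_pt_eps. intros eps He.
    destruct (H (eps / 3)) as [h [[Hc _] Hh]]; [lra|].
    destruct (proj1 (continuity_pt_eps h x0) (Hc x0) (eps / 3)) as [d [Hd K]]; [lra|].
    exists d. split; auto. intros y Hy.
    replace (psi y - psi x0) with ((psi y - h y) + (h y - h x0) - (psi x0 - h x0)) by ring.
    pose proof (Hh y). pose proof (Hh x0). specialize (K y Hy).
    unfold Rabs in *. repeat destruct Rcase_abs; lra.
  - intro x. split; apply Rnot_lt_le; intro Hlt.
    + destruct (H (- psi x / 2)) as [h [[_ Hr] Hh]]; [lra|].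
      specialize (Hh x). specialize (Hr x). apply Rabs_le_between in Hh. lra.
    + destruct (H ((psi x - M) / 2)) as [h [[_ Hr] Hh]]; [lra|].
      specialize (Hh x). specialize (Hr x). apply Rabs_le_between in Hh. lra.
Qed.

Lemma q_ge0 : 0 <= q.
Proof.
  destruct M0_spec as [_ [H0 _]]. destruct M1_spec as [_ [H1 _]].
  destruct (M2_spec k k_cont) as [_ H2].
  unfold q. pose proof (Rmult_le_pos _ _ L0_ge0 H0). pose proof (Rmult_le_pos _ _ L1_ge0 H1).
  pose proof (Rmult_le_pos _ _ L2_ge0 H2). lra.
Qed.

Lemma admissible_dist psi1 psi2 x : admissible M psi1 -> admissible M psi2 ->
  Rabs (psi1 x - psi2 x) <= M.
Proof. intros [_ H1] [_ H2]. specialize (H1 x). specialize (H2 x). apply Rabs_le. lra. Qed.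

Lemma admissible_Top psi : admissible M psi -> admissible M (Top k f psi).
Proof. intros Hp. split; [apply continuity_Top, Hp | intro; apply Top_range, Hp]. Qed.

Lemma Top_fixed_point : exists g, admissible M g /\ forall x, Top k f g x = g x.
Proof.
  apply (contraction_fixed_point (admissible M) (Top k f) q M q_ge0 q_lt1 admissible_Top
           Top_contraction admissible_dist admissible_closed (fun _ => 0)).
  split; [intro; apply continuity_pt_const; intros ? ?; reflexivity | intros; lra].
Qed.

Lemma Top_fixed_point_unique psi1 psi2 : admissible M psi1 -> admissible M psi2 ->
  (forall x, 0 < x < 1 -> Top k f psi1 x = psi1 x) ->
  (forall x, 0 < x < 1 -> Top k f psi2 x = psi2 x) ->
  forall x, 0 < x < 1 -> psi1 x = psi2 x.
Proof.
  apply (contraction_unique (admissible M) (Top k f) q M q_ge0 q_lt1 Top_contraction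
           admissible_dist).
Qed.

Lemma fixed_point_nonzero g : admissible M g -> (forall x, Top k f g x = g x) ->
  (exists x, 0 <= x <= 1 /\ f x 0 0 0 <> 0) -> exists s0, 0 <= s0 <= 1 /\ 0 < g s0.
Proof.
  intros [Hc Hr] Hfix [x0 [Hx0 Hf]]. apply NNPP. intro Hn.
  assert (Z : forall s, 0 <= s <= 1 -> g s = 0).
  { intros s Hs. pose proof (Hr s). destruct (Rle_lt_dec (g s) 0); [lra|]. exfalso. eauto. }
  assert (U0 : forall x, Uop g x = 0)
    by (intro x; apply RInt_zero_on01; intros s Hs; rewrite Z by lra; ring).
  assert (V0 : Vop g x0 = 0) by (apply RInt_zero_on01; intros s Hs; rewrite Z by lra; ring).
  assert (Z0 : Zop k g x0 = 0) by (apply RInt_zero_on01; intros t _; rewrite U0; ring).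
  assert (E : g x0 = f x0 0 0 0).
  { rewrite <- Hfix at 1. unfold Top. rewrite clamp01_id, U0, V0, Z0 by auto. reflexivity. }
  apply Hf. rewrite <- E. apply Z, Hx0.
Qed.

Lemma fixed_point_pos_sol g : admissible M g -> (forall x, Top k f g x = g x) ->
  (exists s0, 0 <= s0 <= 1 /\ 0 < g s0) -> is_pos_sol k f M (Uop g).
Proof.
  intros Hg Hfix Hpos. pose proof Hg as [Hc Hr].
  exists (Vop g), (sol2 g), (sol3 g), g.
  repeat match goal with |- _ /\ _ => split end.
  - apply deriv_on01_Uop, Hc.
  - apply deriv_on01_Vop, Hc.
  - apply deriv_on01_is_derive, is_derive_sol2, Hc.
  - apply deriv_on01_is_derive, is_derive_sol3, Hc.
  - apply cont_on01_continuity, Hc.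
  - intros x Hx. rewrite <- Hfix at 1. unfold Top. rewrite clamp01_id by lra. reflexivity.
  - rewrite Uop_sol0 by (auto; lra). apply sol0_0.
  - rewrite Uop_sol0 by (auto; lra). apply sol0_1.
  - apply sol2_0.
  - apply sol2_1.
  - intros x Hx. apply Uop_pos; auto. intros; apply Hr.
  - intros x Hx. destruct (inD_Uop g x Hg Hx) as [_ [HU [HV _]]]. auto.
Qed.

Lemma pos_sol_fixed_point w : is_pos_sol k f M w ->
  exists psi, admissible M psi /\ (forall x, 0 < x < 1 -> Top k f psi x = psi x) /\
    forall x, 0 <= x <= 1 -> w x = Uop psi x.
Proof.
  intros [w1 [w2 [w3 [w4 [D1 [D2 [D3 [D4 [C4 [Eq [B0 [B1 [B20 [B21 [_ Bnd]]]]]]]]]]]]]]].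
  set (psi := fun x => w4 (clamp01 x)).
  assert (Hc : continuity psi) by apply continuity_clamp01_comp, C4.
  pose proof (bvp_solution_eq psi w w1 w2 w3 w4 Hc D1 D2 D3 D4
                ltac:(intros; unfold psi; rewrite clamp01_id; auto) B0 B1 B20 B21) as BV.
  assert (WU : forall x, 0 <= x <= 1 -> w x = Uop psi x)
    by (intros; rewrite Uop_sol0; auto; apply BV; auto).
  assert (WV : forall x, 0 <= x <= 1 -> w1 x = Vop psi x)
    by (intros; rewrite Vop_sol1; auto; apply BV; auto).
  assert (WZ : forall x, RInt (fun t => k x t * w t) 0 1 = Zop k psi x).
  { intro x. apply RInt_extR. intros t Ht. rewrite Rmin_left, Rmax_right in Ht by lra.
    rewrite WU by lra. reflexivity. }
  assert (Hw : forall x, 0 <= x <= 1 -> inD k M x (w x) (w1 x) (RInt (fun t => k x t * w t) 0 1)).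
  { intros x Hx. split; [auto | split; [apply Bnd, Hx | split; [apply Bnd, Hx |]]].
    rewrite (Rmult_comm M0), Rmult_assoc. apply abs_RInt_k_mult_le; auto.
    - eapply deriv_on01_cont; eauto.
    - intros t Ht. destruct (Bnd t ltac:(lra)) as [[? ?] _]. rewrite Rabs_pos_eq; lra. }
  exists psi. split; [split; auto | split; auto].
  - intro x. apply (cont_on01_interior_bounds w4); [auto | | apply clamp01_in].
    intros y Hy. rewrite Eq by auto. apply f_range, Hw. lra.
  - intros x Hx. unfold Top, psi. rewrite !clamp01_id by lra.
    rewrite Eq by lra. rewrite WZ, WU, WV by lra. reflexivity.
Qed.

End Main.

Theorem theorem2 (k : R -> R -> R) (f : R -> R -> R -> R -> R)
  (M L0 L1 L2 : R) :
  cont_square k ->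
  0 < M -> 0 <= L0 -> 0 <= L1 -> 0 <= L2 ->
  (* (i) *)
  cont_on_D k M f ->
  (forall x u v z, inD k M x u v z -> 0 <= f x u v z <= M) ->
  (exists x, 0 <= x <= 1 /\ f x 0 0 0 <> 0) ->
  (* (ii) *)
  (forall x1 u1 v1 z1 x2 u2 v2 z2,
     inD k M x1 u1 v1 z1 -> inD k M x2 u2 v2 z2 ->
     Rabs (f x2 u2 v2 z2 - f x1 u1 v1 z1)
       <= L0 * Rabs (u2 - u1) + L1 * Rabs (v2 - v1) + L2 * Rabs (z2 - z1)) ->
  (* (iii) *)
  L0 * M0 + L1 * M1 + L2 * M2 k < 1 ->
  exists u, is_pos_sol k f M u /\
    forall w, is_pos_sol k f M w -> forall x, 0 <= x <= 1 -> w x = u x.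
Proof.
  intros Hk HM HL0 HL1 HL2 Hfc Hfr Hnz Hlip Hq.
  destruct (Top_fixed_point k f M L0 L1 L2) as [g [Hg Hfix]]; auto.
  exists (Uop g). split.
  - apply (fixed_point_pos_sol k f M); auto.
    apply (fixed_point_nonzero k f M); auto.
  - intros w Hw x Hx.
    destruct (pos_sol_fixed_point k f M Hk Hfr w Hw) as [psi [Hpsi [Hfix' ->]]]; auto.
    apply Uop_ext. apply (Top_fixed_point_unique k f M L0 L1 L2); auto.
Qed.
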